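(* For the model $(\mathcal N,f,r)$ with $f$ the algebraic sum over $\mathbb F_q$, $$\widehat{\mathcal C}(\mathcal N,f,r)\le\min_{W\in\mathcal W'_r}|C^*_W|,$$ and this right-hand side equals $\min\{|C|-|W|:(W,C)\in\mathcal W_r\times\Lambda(\mathcal N),\ W\subseteq C,\ D_W\subseteq I_C\}$, where $\mathcal W'_r=\{W\in\mathcal W_r:W=\widehat W\}$ and $C^*_W$ is the primary minimum cut separating $\rho$ from $D_W$ in the residual graph $\mathcal G_W$.
   Context: Network model: $\mathcal G=(\mathcal V,\mathcal E)$ is a finite directed acyclic graph (multiple edges allowed); $\mathcal E_{\rm in}(u)$ are the input edges of node $u$. $S=\{\sigma_1,\dots,\sigma_s\}$ is the set of source nodes (exactly the nodes without input edges), $\rho\notin S$ the sink (no output edges), every node other than $\rho$ has a directed path to $\rho$; $\mathcal N=(\mathcal G,S,\rho)$. For a node $\sigma$ and edge $e$, $\sigma\to e$ means there is a directed path from $\sigma$ whose last edge is $e$. For $C\subseteq\mathcal E$: $D_C=\{\sigma\in S:\exists e\in C,\ \sigma\to e\}$, $I_C=\{\sigma\in S:$ no path from $\sigma$ to $\rho$ after deleting $C\}$; $\Lambda(\mathcal N)=\{C\subseteq\mathcal E:I_C\neq\emptyset\}$. $\mathcal W_r=\{W\subseteq\mathcal E:|W|\le r\}$. $\mathcal G_W$ is $\mathcal G$ with the edges of $W$ deleted. Cuts: an edge set $C$ separates a node set (resp. edge set) $X$ from a node set $U$ if every path from a node of $U$ to a node (resp. edge) of $X$ uses an edge of $C$ (formally,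 for an edge set $X$ one subdivides each $e\in X$ by a new node $v_e$ into $e^1,e^2$ and identifies $e^1,e^2$ with $e$ in the cut). A minimum cut has minimum size; a minimum cut separating $X$ from $U$ is primary if it separates from $U$ every minimum cut separating $X$ from $U$ (it exists and is unique); for a node $\rho$ this means separating $\mathcal E_{\rm in}(\rho)$. $\widehat W$ is the primary minimum cut separating $W$ from $D_W$. Secure model: $q$ a prime power, $f(m_1,\dots,m_s)=\sum_i m_i$ over $\mathbb F_q$; each edge carries one symbol of $\mathbb F_q$ per use. An $(\ell,n)$ secure network code: source $\sigma_i$ holds $\mathbf M_i\in\mathbb F_q^\ell$ with i.i.d. uniform entries and a key $\mathbf K_i$ uniform on a finite set $\mathcal K_i$; all mutually independent. Each edge out of $\sigma_i$ carries a function of $(\mathbf M_i,\mathbf K_i)$ with values in $\mathbb F_q^n$; every other edge carries a function in $\mathbb F_q^n$ of the messages on the input edges of its tail; a decoder maps messages on $\mathcal E_{\rm in}(\rho)$ to $\mathbb F_q^\ell$. Admissible: decoder outputs $\sum_i\mathbf m_i$ for all messages and keys, and $I(\mathbf Y_W;\mathbf M_S)=0$ for all $W\in\mathcal W_r$ ($\mathbf Y_W$ the messages on $W$, $\mathbf M_S=(\mathbf M_1,\dots,\mathbf M_s)$). Rate $\ell/n$; $R$ achievable if for every $\epsilon>0$ some admissible code has rate $>R-\epsilon$; $\widehat{\mathcal C}(\mathcal N,f,r)$ is the maximum achievable rate. *)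

From HB Require Import structures.
From mathcomp Require Import all_boot all_order all_algebra.
From mathcomp Require Import reals exp.

Set Implicit Arguments.
Unset Strict Implicit.
Unset Printing Implicit Defensive.

Import Order.TTheory GRing.Theory Num.Theory.
Local Open Scope ring_scope.

Definition walk (V E : finType) (tl hd : E -> V) (u v : V) (p : seq E) : bool :=
  match p with
  | [::] => u == v
  | e :: p' => [&& tl e == u, path (fun a b => hd a == tl b) e p'
                 & hd (last e p') == v]
  end.

Definition acyclic (V E : finType) (tl hd : E -> V) : Prop :=
  forall (u : V) (p : seq E), p != [::] -> ~~ walk tl hd u u p.

Definition Ein (V E : finType) (hd : E -> V) (u : V) : {set E} :=
  [set e | hd e == u].

Definition srcs (V E : finType) (hd : E -> V) : {set V} :=
  [set v | Ein hd v == set0].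

Definition network (V E : finType) (tl hd : E -> V) (rho : V) : Prop :=
  [/\ acyclic tl hd,
      rho \notin srcs hd,
      (forall e, tl e != rho)
    & (forall v, v != rho -> exists p, walk tl hd v rho p)].

Definition reaches (V E : finType) (tl hd : E -> V) (s : V) (e : E) : Prop :=
  exists p : seq E, walk tl hd s (hd e) (rcons p e).


Definition Dset (V E : finType) (tl hd : E -> V) (C : {set E}) (s : V) : Prop :=
  s \in srcs hd /\ exists2 e, e \in C & reaches tl hd s e.

Definition Iset (V E : finType) (tl hd : E -> V) (rho : V) (C : {set E}) (s : V)
  : Prop :=
  s \in srcs hd /\
  ~ (exists p : seq E, walk tl hd s rho p /\ all (fun e => e \notin C) p).

Definition Lambda (V E : finType) (tl hd : E -> V) (rho : V) (C : {set E}) : Prop :=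
  exists s, Iset tl hd rho C s.

(* Cuts, in the graph whose edge set is [A] (A = [set: E] for G itself,
   A = ~: W for the residual graph G_W).
   [sep tl hd A C X U]: the edge set C separates the edge set X from the node
   set U, i.e. every path (in the graph with edges A) from a node of U whose
   last edge belongs to X uses an edge of C (the last edge e in X itself
   counting, as in the subdivision convention e^1 ~ e). *)
Definition sep (V E : finType) (tl hd : E -> V) (A C X : {set E}) (U : V -> Prop)
  : Prop :=
  forall (u : V) (p : seq E) (e : E), U u -> e \in X ->
    walk tl hd u (hd e) (rcons p e) -> all (fun a => a \in A) (rcons p e) ->
    has (fun a => a \in C) (rcons p e).

Definition mincut (V E : finType) (tl hd : E -> V) (A X : {set E}) (U : V -> Prop)
  (C : {set E}) : Prop :=
  [/\ C \subset A, sep tl hd A C X U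
    & forall C' : {set E}, C' \subset A -> sep tl hd A C' X U -> #|C| <= #|C'|]%N.

Definition primary (V E : finType) (tl hd : E -> V) (A X : {set E}) (U : V -> Prop)
  (C : {set E}) : Prop :=
  mincut tl hd A X U C /\
  forall C' : {set E}, mincut tl hd A X U C' -> sep tl hd A C C' U.

Definition is_hat (V E : finType) (tl hd : E -> V) (W : {set E}) : Prop :=
  primary tl hd [set: E] W (Dset tl hd W) W.

Definition Wr' (V E : finType) (tl hd : E -> V) (r : nat) (W : {set E}) : Prop :=
  [/\ (#|W| <= r)%N, W != set0 & is_hat tl hd W].

(* C = C*_W : the primary minimum cut separating rho (i.e. E_in(rho)) from D_W
   in the residual graph G_W *)
Definition Cstar (V E : finType) (tl hd : E -> V) (rho : V) (W C : {set E}) : Prop :=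
  primary tl hd (~: W) (Ein hd rho) (Dset tl hd W) C.

Definition WCpair (V E : finType) (tl hd : E -> V) (rho : V) (r : nat)
  (W C : {set E}) : Prop :=
  [/\ (#|W| <= r)%N, W != set0, Lambda tl hd rho C, W \subset C
    & forall s, Dset tl hd W s -> Iset tl hd rho C s].

Definition srcT (V E : finType) (hd : E -> V) : finType :=
  {v : V | v \in srcs hd}.

(* An (l, n) network code:
   - key s : the finite set K_s of keys of source s (nonempty);
   - enc s m k e : message on an edge e out of source s, a function of (m,k);
   - loc e y : message on an edge e whose tail is not a source, a function of
     the messages y on the input edges of [tl e] (locality condition);
   - dec y : decoding function, a function of the messages on E_in(rho). *)
Record code (F : finFieldType) (V E : finType) (tl hd : E -> V) (rho : V)
    (l n : nat) := Code {
  key : srcT hd -> finType;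
  key_nonempty : forall s, (0 < #|key s|)%N;
  enc : forall s : srcT hd, 'rV[F]_l -> key s -> E -> 'rV[F]_n;
  loc : E -> (E -> 'rV[F]_n) -> 'rV[F]_n;
  dec : (E -> 'rV[F]_n) -> 'rV[F]_l;
  loc_local : forall e (y y' : E -> 'rV[F]_n),
      (forall e', hd e' == tl e -> y e' = y' e') -> loc e y = loc e y';
  dec_local : forall (y y' : E -> 'rV[F]_n),
      (forall e', hd e' == rho -> y e' = y' e') -> dec y = dec y'
}.

(* sample space: all messages M_S and all keys K_S, uniformly distributed
   (hence independent, with i.i.d. uniform message entries) *)
Definition msgT (F : finFieldType) (V E : finType) (hd : E -> V) (l : nat) :=
  {ffun srcT hd -> 'rV[F]_l}.
Definition keyT (F : finFieldType) (V E : finType) (tl hd : E -> V) (rho : V)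
  (l n : nat) (c : code F tl hd rho l n) :=
  {dffun forall s : srcT hd, key c s}.
Definition Omega (F : finFieldType) (V E : finType) (tl hd : E -> V) (rho : V)
  (l n : nat) (c : code F tl hd rho l n) :=
  (msgT F hd l * keyT c)%type.

Definition step (F : finFieldType) (V E : finType) (tl hd : E -> V) (rho : V)
  (l n : nat) (c : code F tl hd rho l n) (w : Omega c) (y : E -> 'rV[F]_n)
  : E -> 'rV[F]_n :=
  fun e => match insub (tl e) : option (srcT hd) with
           | Some s => @enc _ _ _ _ _ _ _ _ c s (w.1 s) (w.2 s) e
           | None => loc c e y
           end.

(* the messages on all edges for given messages/keys: on an acyclic graph
   iterating the local equations #|E| times computes them *)
Definition glob (F : finFieldType) (V E : finType) (tl hd : E -> V) (rho : V)
  (l n : nat) (c : code F tl hd rho l n) (w : Omega c) : E -> 'rV[F]_n :=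
  iter #|E| (step w) (fun _ => 0).

Definition YW (F : finFieldType) (V E : finType) (tl hd : E -> V) (rho : V)
  (l n : nat) (c : code F tl hd rho l n) (W : {set E}) (w : Omega c)
  : {ffun E -> 'rV[F]_n} :=
  [ffun e => if e \in W then glob w e else 0].

Definition prob (R : realType) (T : finType) (P : pred T) : R :=
  #|[set t | P t]|%:R / #|T|%:R.

Definition mutinf (R : realType) (T : finType) (A B : eqType)
  (X : T -> A) (Y : T -> B) : R :=
  \sum_(t : T) (#|T|%:R)^-1 *
     ln (prob R (fun u => (X u == X t) && (Y u == Y t)) /
         (prob R (fun u => X u == X t) * prob R (fun u => Y u == Y t))).

Definition admissible (R : realType) (F : finFieldType) (V E : finType)
  (tl hd : E -> V) (rho : V) (r l n : nat) (c : code F tl hd rho l n) : Prop :=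
  (forall w : Omega c, dec c (glob w) = \sum_(s : srcT hd) w.1 s) /\
  (forall W : {set E}, (#|W| <= r)%N ->
     mutinf R (YW W) (fun w : Omega c => w.1) = 0).

Definition achievable (R : realType) (F : finFieldType) (V E : finType)
  (tl hd : E -> V) (rho : V) (r : nat) (x : R) : Prop :=
  forall eps : R, 0 < eps ->
    exists (l n : nat) (c : code F tl hd rho l n),
      [/\ (0 < n)%N, admissible R r c & x - eps < l%:R / n%:R].

(* Fix W in W'_r and C = C*_W.  Perfect secrecy of the messages
   on W means that, with them held fixed, the message of a source in D_W can
   still take every value in F^l (the keys of the sources in D_W compensate),
   while all sources outside D_W are frozen.  Every path from D_W to rho meets
   C or W, so the decoder output, which equals that message, is a function of
   the n |C| symbols carried by C: q^l <= q^(n |C|).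

   Equality of the minima.  (W, C*_W u W) is an admissible pair with
   |C| - |W| = |C*_W|.  Conversely, for a pair (W0, C0) the primary minimum cut
   W separating W0 from D_W0 has D_W = D_W0 and lies in W'_r, and
   (C0 \ W0) \ W separates rho from D_W in G_W, so |C*_W| <= |C0| - |W0|.
   Primary minimum cuts exist by submodularity of the cut function. *)

From HB Require Import structures.
From mathcomp Require Import all_boot all_order all_algebra.
From mathcomp Require Import boolp reals exp.
From mathcomp Require Import lra ring.
Import Order.TTheory GRing.Theory Num.Theory.

Set Implicit Arguments.
Unset Strict Implicit.
Unset Printing Implicit Defensive.

Lemma rcons_cons_last (T : Type) (p : seq T) (e : T) :
  exists x q, rcons p e = x :: q /\ last x q = e.
Proof.
by case: p => [|y p]; [exists e, [::] | exists y, (rcons p e); rewrite last_rcons].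
Qed.

Lemma has_last_prefix (T : Type) (P : pred T) (x : T) (q : seq T) :
  has P (x :: q) -> exists q1 q2, q = q1 ++ q2 /\ P (last x q1).
Proof.
elim: q x => [|y q IHq] x /=; first by rewrite orbF => Px; exists [::], [::].
case Px: (P x) => /=; first by exists [::], (y :: q).
by case/IHq => q1 [q2 [-> Pq1]]; exists (y :: q1), q2.
Qed.

Section Walks.

Variables (V E : finType) (tl hd : E -> V).

Definition next_edge : rel E := fun a b => hd a == tl b.

Lemma walk_cons (u v : V) (x : E) (q : seq E) :
  walk tl hd u v (x :: q) =
  [&& tl x == u, path next_edge x q & hd (last x q) == v].
Proof. by []. Qed.

Definition sep_path (A C X : {set E}) (U : V -> Prop) : Prop :=
  forall x q, U (tl x) -> path next_edge x q -> last x q \in X ->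
    all (fun a => a \in A) (x :: q) -> has (fun a => a \in C) (x :: q).

Lemma sep_pathP (A C X : {set E}) (U : V -> Prop) :
  sep tl hd A C X U <-> sep_path A C X U.
Proof.
split=> [sepC x q Ux xq qX qA | sepC u p e Uu eX].
  have := sepC (tl x) (belast x q) (last x q) Ux qX.
  by rewrite -lastI walk_cons eqxx xq eqxx; apply.
have [x [q [-> qe]]] := rcons_cons_last p e.
by rewrite walk_cons => /and3P[/eqP xu xq _]; apply: sepC; rewrite ?xu ?qe.
Qed.

Lemma reachesP (s : V) (e : E) :
  reaches tl hd s e <->
  exists x q, [/\ tl x = s, path next_edge x q & last x q = e].
Proof.
split=> [[p] | [x [q [xs xq qe]]]].
  have [x [q [-> qe]]] := rcons_cons_last p e.
  by rewrite walk_cons => /and3P[/eqP xs xq _]; exists x, q.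
by exists (belast x q); rewrite -qe -lastI walk_cons xs xq !eqxx.
Qed.

Lemma reaches_next (s : V) (e e' : E) :
  reaches tl hd s e' -> hd e' = tl e -> reaches tl hd s e.
Proof.
move=> /reachesP[x [q [xs xq qe']]] e'e; apply/reachesP.
exists x, (rcons q e); rewrite rcons_path xq last_rcons /next_edge qe' e'e.
by rewrite eqxx.
Qed.

Lemma sep_refl (A X : {set E}) (U : V -> Prop) : sep tl hd A X X U.
Proof.
by apply/sep_pathP => x q _ _ qX _; apply/hasP; exists (last x q); rewrite ?mem_last.
Qed.

Lemma sep_trans (A C K X : {set E}) (U : V -> Prop) :
  sep tl hd A K X U -> sep tl hd A C K U -> sep tl hd A C X U.
Proof.
move=> /sep_pathP sepK /sep_pathP sepC; apply/sep_pathP => x q Ux xq qX qA.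
have [q1 [q2 [q12 q1K]]] := has_last_prefix (sepK x q Ux xq qX qA).
move: xq qA; rewrite q12 cat_path -cat_cons all_cat has_cat.
by case/andP=> xq1 _ /andP[q1A _]; rewrite (sepC x q1 Ux xq1 q1K q1A).
Qed.

Lemma sep_residual (W C X : {set E}) (U : V -> Prop) :
  sep tl hd (~: W) C X U -> sep tl hd setT (C :|: W) X U.
Proof.
move=> /sep_pathP sepC; apply/sep_pathP => x q Ux xq qX _.
have [qW | qW] := boolP (has (fun a => a \in W) (x :: q)).
  by apply: sub_has qW => a aW; rewrite inE aW orbT.
have qnW : all (fun a => a \in ~: W) (x :: q).
  by apply/allP => a aq; rewrite inE; apply: contra qW => aW; apply/hasP; exists a.
by apply: sub_has (sepC x q Ux xq qX qnW) => a aC; rewrite inE aC.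
Qed.

End Walks.

Section Cuts.

Variables (V E : finType) (tl hd : E -> V).
Variables (A X : {set E}) (U : V -> Prop).

Local Notation next_edge := (next_edge tl hd).
Local Notation sep := (sep tl hd A).
Local Notation mincut := (mincut tl hd A X U).

Definition reach (K : {set E}) : {set V} :=
  [set v | `[< U v \/ exists x q, [/\ U (tl x), path next_edge x q,
                 all (fun a => (a \in A) && (a \notin K)) (x :: q)
               & hd (last x q) = v] >]].

Definition boundary (S : {set V}) : {set E} :=
  [set e in A | (tl e \in S) && ((e \in X) || (hd e \notin S))].

Lemma in_boundary (S : {set V}) (e : E) :
  (e \in boundary S) = [&& e \in A, tl e \in S & (e \in X) || (hd e \notin S)].
Proof. by rewrite inE. Qed.

Lemma boundary_subset (S : {set V}) : boundary S \subset A.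
Proof. by apply/subsetP => e; rewrite in_boundary => /andP[]. Qed.

Lemma boundary_sep (S : {set V}) (Y : {set E}) :
  (forall v, U v -> v \in S) ->
  (forall y, y \in Y -> y \in A -> tl y \in S -> y \in boundary S) ->
  sep (boundary S) Y U.
Proof.
move=> US YS; apply/sep_pathP => x q /US; elim: q x => [|y q IHq] x /= xS.
  by move=> _ xY /andP[xA _]; rewrite YS.
move=> /andP[/eqP xy yq] qY /andP[xA qA].
have [//|xS'] := boolP (x \in boundary S); apply: IHq => //.
by move: xS'; rewrite in_boundary xA xS /= negb_or negbK -xy => /andP[].
Qed.

Lemma boundary_sep_cut (S : {set V}) :
  (forall v, U v -> v \in S) -> sep (boundary S) X U.
Proof. by move=> US; apply: boundary_sep => // y yX yA yS; rewrite in_boundary yA yS yX. Qed.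

Lemma reach_src (K : {set E}) (v : V) : U v -> v \in reach K.
Proof. by move=> Uv; rewrite inE; apply/asboolP; left. Qed.

Lemma reach_walk (K : {set E}) (x : E) (q : seq E) :
  U (tl x) -> path next_edge x q ->
  all (fun a => (a \in A) && (a \notin K)) (x :: q) ->
  hd (last x q) \in reach K.
Proof. by move=> Ux xq qAK; rewrite inE; apply/asboolP; right; exists x, q. Qed.

Lemma reach_edge (K : {set E}) (e : E) :
  tl e \in reach K -> e \in A -> e \notin K ->
  exists x q, [/\ U (tl x), path next_edge x q,
                all (fun a => (a \in A) && (a \notin K)) (x :: q) & last x q = e].
Proof.
rewrite inE => /asboolP[Ue | [x [q [Ux xq qAK qe]]]] eA eK.
  by exists e, [::]; rewrite /= eA eK.
exists x, (rcons q e); rewrite rcons_path xq last_rcons -rcons_cons all_rcons.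
by rewrite /next_edge qe eqxx eA eK.
Qed.

Lemma boundary_reach_subset (K : {set E}) :
  sep K X U -> boundary (reach K) \subset K.
Proof.
move=> /sep_pathP sepK; apply/subsetP => e; rewrite in_boundary => /and3P[eA eS eXS].
apply: contraT => eK; have [x [q [Ux xq qAK qe]]] := reach_edge eS eA eK.
case/orP: eXS => [eX | ]; last by rewrite -qe reach_walk.
have qA : all (fun a => a \in A) (x :: q) by apply: sub_all qAK => a /andP[].
have /hasP[a aq aK] := sepK x q Ux xq (etrans (congr1 _ qe) eX) qA.
by move/allP: qAK => /(_ a aq) /andP[_]; rewrite aK.
Qed.

Lemma reach_boundary_subset (S : {set V}) :
  (forall v, U v -> v \in S) -> reach (boundary S) \subset S.
Proof.
move=> US; apply/subsetP => v; rewrite inE => /asboolP[/US // | [x [q [Ux]]]].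
move: (US _ Ux) => {Ux}; elim: q x => [|y q IHq] x /= xS.
  move=> _ /andP[/andP[xA xS'] _] <-.
  by move: xS'; rewrite in_boundary xA xS /= negb_or negbK => /andP[].
move=> /andP[/eqP xy yq] /andP[/andP[xA xS'] qAK]; apply: IHq => //.
by move: xS'; rewrite in_boundary xA xS /= negb_or negbK -xy => /andP[].
Qed.

Lemma boundary_submod (S T : {set V}) :
  (#|boundary (S :&: T)| + #|boundary (S :|: T)| <=
   #|boundary S| + #|boundary T|)%N.
Proof.
rewrite -!sum1_card !(big_mkcond (fun e => e \in _)) -!big_split /=.
apply: leq_sum => e _; rewrite !inE.
by case: (e \in A); case: (tl e \in S); case: (tl e \in T); case: (e \in X);
  case: (hd e \in S); case: (hd e \in T).
Qed.

Lemma mincut_exists : exists K, mincut K.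
Proof.
have /nat_has_minimum[m [[K [KA sepK <-]] minK]] :
    exists m, exists K : {set E}, [/\ K \subset A, sep K X U & #|K| = m].
  by exists #|A|, A; split=> //; apply/sep_pathP => x q _ _ _ /= /andP[->].
by exists K; split=> // C CA sepC; apply: minK; exists C.
Qed.

Lemma boundary_reach_mincut (K : {set E}) : mincut K -> boundary (reach K) = K.
Proof.
case=> KA sepK minK; apply/eqP; rewrite eqEcard boundary_reach_subset //=.
by apply: minK; [apply: boundary_subset | apply/boundary_sep_cut/reach_src].
Qed.

Lemma mincut_boundary_meet (K K' : {set E}) :
  mincut K -> mincut K' -> mincut (boundary (reach K :&: reach K')).
Proof.
move=> mK mK'; have [KA sepK minK] := mK; have [K'A sepK' minK'] := mK'.
have UI v : U v -> v \in reach K :&: reach K' by move=> Uv; rewrite inE !reach_src.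
have UU v : U v -> v \in reach K :|: reach K' by move=> Uv; rewrite inE reach_src.
have cardKK' : #|K| = #|K'| by apply/eqP; rewrite eqn_leq minK // minK'.
have sub := boundary_submod (reach K) (reach K').
rewrite !boundary_reach_mincut // -cardKK' in sub.
split; [exact: boundary_subset | exact: boundary_sep_cut |].
move=> C CA sepC; apply: leq_trans (minK _ CA sepC).
rewrite -(leq_add2r #|boundary (reach K :|: reach K')|); apply: leq_trans sub _.
rewrite leq_add2l; apply: minK; [exact: boundary_subset | exact: boundary_sep_cut].
Qed.

Lemma reach_subset_sep (K K' : {set E}) :
  mincut K -> mincut K' -> reach K \subset reach K' -> sep K K' U.
Proof.
move=> mK mK' KK'; rewrite -(boundary_reach_mincut mK).
apply: boundary_sep => [v|y]; first exact: reach_src.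
rewrite -{1}(boundary_reach_mincut mK') !in_boundary => /and3P[yA yS' yXS] _ yS.
rewrite yA yS; case/orP: yXS => [-> // | yS''].
by rewrite (contra (subsetP KK' (hd y)) yS'') orbT.
Qed.

(* A minimum cut whose reach set is minimal is primary. *)
Lemma primary_exists : exists K, primary tl hd A X U K.
Proof.
have [K0 mK0] := mincut_exists.
suff: forall m K, #|reach K| = m -> mincut K -> exists P, primary tl hd A X U P.
  by move/(_ _ K0 erefl mK0).
elim/ltn_ind => m IHm K cardK mK.
have [primK | ] := pselect (forall K', mincut K' -> sep K K' U).
  by exists K; split.
move=> /existsNP[K' /not_implyP[mK' nsepKK']].
apply: (IHm _ _ _ erefl (mincut_boundary_meet mK mK')); rewrite -cardK.
apply: (leq_ltn_trans (subset_leq_card (reach_boundary_subset _))).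
  by move=> v Uv; rewrite inE !reach_src.
apply: proper_card; rewrite properEneq subsetIl andbT.
by apply/eqP => /setIidPl KK'; apply/nsepKK'/reach_subset_sep.
Qed.

End Cuts.

Section Acyclic.

Variables (V E : finType) (tl hd : E -> V).
Hypothesis acyc : acyclic tl hd.

Local Notation next_edge := (next_edge tl hd).

Definition ancestors (e : E) : {set E} :=
  [set f | [exists g, next_edge f g && connect next_edge g e]].

Definition height (e : E) : nat := #|ancestors e|.

Lemma notin_ancestors (e : E) : e \notin ancestors e.
Proof.
rewrite inE; apply/existsP => -[g /andP[eg /connectP[p gp pe]]].
have := @acyc (tl g) (g :: p) isT.
by rewrite walk_cons eqxx gp -pe -(eqP eg) eqxx.
Qed.

Lemma height_next (e e' : E) : hd e' = tl e -> height e' < height e.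
Proof.
move=> e'e; apply: proper_card; apply/properP; split.
  apply/subsetP => f; rewrite !inE => /existsP[g /andP[fg ge']].
  apply/existsP; exists g; rewrite fg (connect_trans ge') //.
  by apply: connect1; rewrite /next_edge e'e.
exists e'; last exact: notin_ancestors.
by rewrite inE; apply/existsP; exists e; rewrite /next_edge e'e eqxx connect0.
Qed.

Lemma height_lt_card (e : E) : height e < #|E|.
Proof.
rewrite -cardsT; apply: proper_card; apply/properP; split; first exact: subsetT.
by exists e; [rewrite inE | exact: notin_ancestors].
Qed.

Lemma edge_ind (P : E -> Prop) :
  (forall e, (forall e', hd e' = tl e -> P e') -> P e) -> forall e, P e.
Proof.
move=> IH e; have [m le_em] := ubnP (height e).
elim: m e le_em => // m IHm e le_em; apply: IH => e' e'e.
by apply: IHm; apply: leq_trans (height_next e'e) _.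
Qed.

Lemma source_reaches (e : E) : exists2 s, s \in srcs hd & reaches tl hd s e.
Proof.
elim/edge_ind: e => e IHe; have [es | ] := boolP (tl e \in srcs hd).
  by exists (tl e) => //; apply/reachesP; exists e, [::].
rewrite inE => /set0Pn[e']; rewrite inE => /eqP e'e.
have [s ss se'] := IHe e' e'e.
by exists s => //; apply: reaches_next se' e'e.
Qed.

Lemma Dset_nonempty (W : {set E}) : W != set0 -> exists s, Dset tl hd W s.
Proof.
case/set0Pn => w wW; have [s ss sw] := source_reaches w.
by exists s; split=> //; exists w.
Qed.

End Acyclic.

Section Hat.

Variables (V E : finType) (tl hd : E -> V).

Local Notation D := (Dset tl hd).

Lemma Dset0 (s : V) : ~ D set0 s.
Proof. by case=> _ [e]; rewrite inE. Qed.

(* An edge of [W'] reached from no source of [D W0] could be dropped from the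
   cut. *)
Lemma Dset_mincut (W0 W' : {set E}) :
  mincut tl hd setT W0 (D W0) W' -> D W' = D W0.
Proof.
case=> _ /sep_pathP sepW' minW'; apply: funext => s; apply: propext; split.
  case=> ss [e eW' se]; apply: contrapT => nDs.
  have : #|W'| <= #|W' :\ e|.
    apply: minW'; first exact: subsetT.
    apply/sep_pathP => x q Dx xq qW0 qT.
    have [q1 [q2 [q12 q1W']]] := has_last_prefix (sepW' x q Dx xq qW0 qT).
    have [q1e | q1e] := eqVneq (last x q1) e.
      case: nDs; split=> //; exists (last x q) => //.
      move/reachesP: se => [y [p [ys yp pe]]]; apply/reachesP.
      exists y, (p ++ q2); rewrite cat_path yp last_cat pe -q1e.
      by move: xq; rewrite q12 cat_path last_cat => /andP[_ ->].
    apply/hasP; exists (last x q1); last by rewrite !inE q1e.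
    by rewrite q12 -cat_cons mem_cat mem_last.
  by rewrite (cardsD1 e W') eW' add1n ltnn.
case=> ss [w wW0 /reachesP[x [q [xs xq qw]]]].
have Dx : D W0 (tl x) by rewrite xs; split=> //; exists w => //; apply/reachesP; exists x, q.
have qT : all (fun a => a \in [set: E]) (x :: q) by apply/allP => a; rewrite inE.
have [q1 [q2 [q12 q1W']]] := has_last_prefix (sepW' x q Dx xq (etrans (congr1 _ qw) wW0) qT).
split=> //; exists (last x q1) => //; apply/reachesP; exists x, q1; split=> //.
by move: xq; rewrite q12 cat_path => /andP[].
Qed.

Lemma primary_is_hat (W0 W' : {set E}) :
  primary tl hd setT W0 (D W0) W' -> is_hat tl hd W'.
Proof.
move=> [mW' primW']; have DW' := Dset_mincut mW'.
have [_ sepW' minW'] := mW'.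
have sepW0 C : sep tl hd setT C W' (D W') -> sep tl hd setT C W0 (D W0).
  by rewrite DW'; apply: sep_trans.
have mW'' : mincut tl hd setT W' (D W') W'.
  split; [exact: subsetT | exact: sep_refl |].
  by move=> C CT sepC; apply: minW' CT (sepW0 _ sepC).
split=> // C [CT sepC minC]; rewrite DW'; apply: primW'; split=> //.
  exact: sepW0.
move=> C' C'T sepC'; apply: leq_trans (minW' _ C'T sepC').
by case: mW'' => _ sepW'W' _; apply: minC.
Qed.

End Hat.

Section Pairs.

Variables (V E : finType) (tl hd : E -> V) (rho : V) (r : nat).
Hypothesis net : network tl hd rho.

Local Notation D := (Dset tl hd).

Lemma network_acyclic : acyclic tl hd.
Proof. by case: net. Qed.

Lemma source_neq_sink (s : V) : s \in srcs hd -> s != rho.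
Proof. by case: net => _ rhoS _ _ sS; apply: contraNneq rhoS => <-. Qed.

Lemma sep_Iset (W C : {set E}) :
  sep tl hd (~: W) C (Ein hd rho) (D W) ->
  forall s, D W s -> Iset tl hd rho (C :|: W) s.
Proof.
move=> /sep_pathP sepC s Ds; split; first by case: Ds.
case=> -[|x q] []; first by rewrite /= (negbTE (source_neq_sink (proj1 Ds))).
rewrite walk_cons => /and3P[/eqP xs xq /eqP qrho] qCW.
have qW : all (fun a => a \in ~: W) (x :: q).
  by apply: sub_all qCW => a; rewrite !inE negb_or => /andP[].
have qEin : last x q \in Ein hd rho by rewrite inE qrho.
have Dx : D W (tl x) by rewrite xs.
have /hasP[a aq aC] := sepC x q Dx xq qEin qW.
by move/allP: qCW => /(_ a aq); rewrite inE aC.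
Qed.

Lemma WCpair_of_Cstar (W C : {set E}) :
  Wr' tl hd r W -> Cstar tl hd rho W C ->
  WCpair tl hd rho r W (C :|: W) /\ #|C :|: W| - #|W| = #|C|.
Proof.
move=> [Wr Wn _] [[CW sepC _] _]; have I := sep_Iset sepC.
have [s Ds] := Dset_nonempty network_acyclic Wn.
split; first by split=> //; [exists s; apply: I | exact: subsetUr].
rewrite -cardsDS ?subsetUr //; suff -> : (C :|: W) :\: W = C by [].
apply/setP => e; rewrite !inE.
have [eW | _] := boolP (e \in W); last by rewrite orbF.
by apply/esym/negbTE; apply: contraL eW => /(subsetP CW); rewrite inE.
Qed.

Lemma WCpair_exists : 0 < r -> exists W C, WCpair tl hd rho r W C.
Proof.
move=> r_gt0; have [_ rhoS _ _] := net.
move: rhoS; rewrite inE => /set0Pn[e]; rewrite inE => /eqP erho.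
have Isrc s : s \in srcs hd -> Iset tl hd rho [set: E] s.
  move=> sS; split=> // -[[|x q] []]; first by rewrite /= (negbTE (source_neq_sink sS)).
  by move=> _ /andP[]; rewrite inE.
exists [set e], [set: E]; split; rewrite ?cards1 ?subsetT //.
- by apply/set0Pn; exists e; rewrite inE.
- by have [s sS _] := source_reaches network_acyclic e; exists s; apply: Isrc.
- by move=> s [sS _]; apply: Isrc.
Qed.

(* Paths from [D W0] to [rho] avoiding [W] cannot meet [W0] (they would have
   crossed [W] first), so they are cut by [C0 :\: W0]. *)
Lemma pair_residual_sep (W0 C0 W : {set E}) :
  (forall s, D W0 s -> Iset tl hd rho C0 s) ->
  sep tl hd setT W W0 (D W0) -> D W = D W0 ->
  sep tl hd (~: W) ((C0 :\: W0) :&: ~: W) (Ein hd rho) (D W).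
Proof.
move=> DI /sep_pathP sepW DW; rewrite DW; apply/sep_pathP => x q Dx xq qrho qW.
have qW0 : all (predC (fun a => a \in W0)) (x :: q).
  rewrite all_predC; apply/negP => qW0.
  have [q1 [q2 [q12 q1W0]]] := has_last_prefix qW0.
  have q1T : all (fun a => a \in [set: E]) (x :: q1) by apply/allP => a; rewrite inE.
  have xq1 : path (next_edge tl hd) x q1 by move: xq; rewrite q12 cat_path => /andP[].
  have /hasP[a aq1 aW] := sepW x q1 Dx xq1 q1W0 q1T.
  have aq : a \in x :: q by rewrite q12 -cat_cons mem_cat aq1.
  by move/allP: qW => /(_ a aq); rewrite inE aW.
have /hasP[a aq aC0] : has (fun a => a \in C0) (x :: q).
  apply: contrapT => /negP qC0; case: (DI _ Dx) => _; apply.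
  exists (x :: q); rewrite walk_cons eqxx xq all_predC qC0.
  by move: qrho; rewrite inE.
apply/hasP; exists a => //; move/allP: qW0 => /(_ a aq) /= aW0.
by move/allP: qW => /(_ a aq); rewrite !inE aC0 aW0 => ->.
Qed.

Lemma Cstar_of_WCpair (W0 C0 : {set E}) :
  WCpair tl hd rho r W0 C0 ->
  exists W C, [/\ Wr' tl hd r W, Cstar tl hd rho W C & #|C| <= #|C0| - #|W0|].
Proof.
case=> W0r W0n _ W0C0 DI.
have [W primW] := primary_exists tl hd setT W0 (D W0).
have [C primC] := primary_exists tl hd (~: W) (Ein hd rho) (D W).
have [mW _] := primW; have DW := Dset_mincut mW; have [_ sepW minW] := mW.
have Wr : #|W| <= r.
  by apply: leq_trans W0r; apply: minW; [exact: subsetT | exact: sep_refl].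
have Wn : W != set0.
  apply: contraTneq isT => W0'; have [s] := Dset_nonempty network_acyclic W0n.
  by rewrite -DW W0'; move/Dset0.
exists W, C; split=> //; first by split=> //; apply: primary_is_hat primW.
have [[_ _ minC] _] := primC; rewrite -cardsDS //.
apply: leq_trans (subset_leq_card (subsetIl _ (~: W))).
by apply: minC; [exact: subsetIr | exact: pair_residual_sep].
Qed.

Lemma min_Cstar_eq_min_WCpair : 0 < r ->
  exists v : nat,
     [/\ (exists W C, [/\ Wr' tl hd r W, Cstar tl hd rho W C & #|C| = v]),
         (forall W C, Wr' tl hd r W -> Cstar tl hd rho W C -> v <= #|C|),
         (exists W C, WCpair tl hd rho r W C /\ #|C| - #|W| = v)
       & (forall W C, WCpair tl hd rho r W C -> v <= #|C| - #|W|)].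
Proof.
move=> r_gt0; have [W1 [C1 pair1]] := WCpair_exists r_gt0.
have /nat_has_minimum[v [[W0 [C0 [pair0 <-]]] minv]] :
    exists v, exists W C, WCpair tl hd rho r W C /\ #|C| - #|W| = v.
  by exists (#|C1| - #|W1|), W1, C1.
have le_Cstar W C : Wr' tl hd r W -> Cstar tl hd rho W C -> #|C0| - #|W0| <= #|C|.
  move=> WW CC; have [pairWC <-] := WCpair_of_Cstar WW CC.
  by apply: minv; exists W, (C :|: W).
exists (#|C0| - #|W0|); split; [ | exact: le_Cstar | by exists W0, C0 | ].
  have [W [C [WW CC leC]]] := Cstar_of_WCpair pair0.
  by exists W, C; split=> //; apply/eqP; rewrite eqn_leq leC (le_Cstar W C WW CC).
by move=> W C pairWC; apply: minv; exists W, C.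
Qed.

End Pairs.

Section Evaluation.

Variables (F : finFieldType) (V E : finType) (tl hd : E -> V) (rho : V).
Variables (l n : nat) (c : code F tl hd rho l n).

Lemma glob_upstream (w w' : Omega c) (e : E) :
  (forall s : srcT hd, reaches tl hd (val s) e -> w.1 s = w'.1 s /\ w.2 s = w'.2 s) ->
  glob w e = glob w' e.
Proof.
rewrite /glob; elim: #|E| e => [|k IHk] e ww' //=; rewrite /step.
case: insubP => [s _ se | _].
  have sr : reaches tl hd (val s) e by rewrite se; apply/reachesP; exists e, [::].
  by have [-> ->] := ww' s sr.
apply: loc_local => e' /eqP e'e; apply: IHk => s se'; apply: ww'.
exact: reaches_next se' e'e.
Qed.

Lemma eq_step (w : Omega c) (y y' : E -> 'rV[F]_n) (e : E) :
  (forall e', hd e' = tl e -> y e' = y' e') -> step w y e = step w y' e.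
Proof.
by move=> yy'; rewrite /step; case: insubP => // _; apply: loc_local => e' /eqP /yy'.
Qed.

Hypothesis acyc : acyclic tl hd.

(* An edge of height [h] has its final value after [h + 1] rounds. *)
Lemma iter_step_stable (w : Omega c) (m k : nat) (e : E) :
  height tl hd e < m <= k ->
  iter k (step w) (fun _ => 0%R) e = iter m (step w) (fun _ => 0%R) e.
Proof.
elim: m k e => [|m IHm] [|k] e /andP[hem mk] //; rewrite !iterS.
apply: eq_step => e' e'e; apply: IHm.
by rewrite (leq_trans (height_next acyc e'e) hem).
Qed.

Lemma glob_step (w : Omega c) (e : E) : glob w e = step w (glob w) e.
Proof.
by rewrite /glob -iterS [RHS](@iter_step_stable w #|E|) ?height_lt_card ?leqnSn.
Qed.

Lemma glob_eq_sep (U : V -> Prop) (G Y : {set E}) (w w' : Omega c) :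
  (forall s : srcT hd, ~ U (val s) -> w.1 s = w'.1 s /\ w.2 s = w'.2 s) ->
  {in G, glob w =1 glob w'} -> sep tl hd setT G Y U -> {in Y, glob w =1 glob w'}.
Proof.
move=> ww' Gww' /sep_pathP sepG e eY.
have : forall x q, U (tl x) -> path (next_edge tl hd) x q -> last x q = e ->
    has (fun a => a \in G) (x :: q).
  move=> x q Ux xq qe; apply: sepG => //; first by rewrite qe.
  by apply/allP => a; rewrite inE.
elim/(edge_ind acyc): e {eY} => e IHe cut_e.
have [eG | eG] := boolP (e \in G); first exact: Gww'.
rewrite (glob_step w) (glob_step w') /step; case: insubP => [s _ se | _].
  have nUs : ~ U (val s).
    by rewrite se => Ue; move: (cut_e e [::] Ue isT erefl); rewrite /= orbF (negbTE eG).
  by have [-> ->] := ww' s nUs.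
apply: loc_local => e' /eqP e'e; apply: IHe => // x q Ux xq qe'.
have := cut_e x (rcons q e) Ux; rewrite rcons_path xq last_rcons /next_edge qe' e'e.
by rewrite eqxx -rcons_cons has_rcons (negbTE eG) => /(_ isT erefl).
Qed.

End Evaluation.

Local Open Scope ring_scope.

Section MutualInformation.

Variables (R : realType) (T : finType) (A B : eqType) (X : T -> A) (Y : T -> B).

Local Notation cJ t := #|[set u | (X u == X t) && (Y u == Y t)]|.
Local Notation cX t := #|[set u | X u == X t]|.
Local Notation cY t := #|[set u | Y u == Y t]|.

Let ratio (t : T) : R := (cX t)%:R * (cY t)%:R / (cJ t)%:R.

Lemma natr_card_set (P : pred T) : (#|[set u | P u]|%:R : R) = \sum_u (P u)%:R.
Proof.
rewrite -sum1_card natr_sum big_mkcond /=; apply: eq_bigr => u _.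
by rewrite inE; case: (P u).
Qed.

Lemma ln_ge_1_subV (a : R) : 0 < a -> 1 - a^-1 <= ln a.
Proof.
move=> a_gt0; have := @le_ln1Dx R (a^-1 - 1).
rewrite addrCA subrr addr0 lnV ?posrE // => /(_ _) ln_le.
have : - ln a <= a^-1 - 1 by apply: ln_le; rewrite ltrBrDr addNr invr_gt0.
lra.
Qed.

Lemma card_set_gt0 (P : pred T) (t : T) : P t -> (0 < #|[set u | P u]|)%N.
Proof. by move=> Pt; apply/card_gt0P; exists t; rewrite inE. Qed.

(* [ln x >= 1 - 1/x] applied to each term. *)
Lemma mutinf_ge_ratio (t0 : T) :
  1 - (#|T|%:R ^+ 2)^-1 * \sum_t ratio t <= mutinf R X Y.
Proof.
set N : R := #|T|%:R.
have T_gt0 : (0 < #|T|)%N by apply/card_gt0P; exists t0.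
have N_gt0 : 0 < N by rewrite ltr0n.
have -> : 1 - (N ^+ 2)^-1 * \sum_t ratio t = \sum_t N^-1 * (1 - ratio t / N).
  rewrite [RHS](eq_bigr (fun t => N^-1 - (N ^+ 2)^-1 * ratio t)); last first.
    by move=> t _; field; rewrite lt0r_neq0.
  rewrite sumrB sumr_const -mulr_sumr; congr (_ - _).
  by rewrite -mulr_natr mulVf // lt0r_neq0.
apply: ler_sum => t _; apply: ler_wpM2l; first by rewrite invr_ge0 ltW.
rewrite /prob -/N.
have cJ_gt0 : (0 < cJ t)%N by apply: (@card_set_gt0 _ t); rewrite !eqxx.
have cX_gt0 : (0 < cX t)%N by apply: (@card_set_gt0 _ t).
have cY_gt0 : (0 < cY t)%N by apply: (@card_set_gt0 _ t).
have a_gt0 : 0 < (cJ t)%:R / N / ((cX t)%:R / N * ((cY t)%:R / N)).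
  by rewrite !(divr_gt0, mulr_gt0) // ltr0n.
apply: le_trans (ln_ge_1_subV a_gt0); rewrite /ratio lerD2l lerN2 le_eqVlt; apply/predU1l.
by field; rewrite !pnatr_eq0 -!lt0n T_gt0 cJ_gt0 cX_gt0 cY_gt0.
Qed.

Lemma sum_fiber_weight_le1 (u v : T) :
  \sum_t ((X u == X t) && (Y v == Y t))%:R / (cJ t)%:R <= 1 :> R.
Proof.
set K := [set t | (X u == X t) && (Y v == Y t)].
rewrite (eq_bigr (fun t => (t \in K)%:R / #|K|%:R)); last first.
  move=> t _; rewrite inE; have [/andP[/eqP Xut /eqP Yvt] | _] := boolP (_ && _); last first.
    by rewrite !mul0r.
  suff -> : [set t' | (X t' == X t) && (Y t' == Y t)] = K by [].
  by apply/setP => t'; rewrite !inE Xut Yvt (eq_sym (X t)) (eq_sym (Y t)).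
rewrite -mulr_suml.
have -> : \sum_t ((t \in K)%:R : R) = #|K|%:R.
  by rewrite /K natr_card_set; apply: eq_bigr => t _; rewrite inE.
have [-> | K_gt0] := posnP #|K|; first by rewrite mul0r ler01.
by rewrite divff // pnatr_eq0 -lt0n.
Qed.

(* Expanding [cX t * cY t] as a double sum counts every pair (u, v) at most
   once, and the pair (t1, t2) not at all. *)
Lemma sum_ratio_le (t1 t2 : T) :
  ~ (exists u, X u = X t1 /\ Y u = Y t2) -> \sum_t ratio t <= #|T|%:R ^+ 2 - 1.
Proof.
move=> nex.
have -> : \sum_t ratio t =
    \sum_u \sum_v \sum_t ((X u == X t) && (Y v == Y t))%:R / (cJ t)%:R.
  symmetry; under eq_bigr do rewrite exchange_big /=.
  rewrite exchange_big /=; apply: eq_bigr => t _.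
  rewrite /ratio !natr_card_set mulr_suml mulr_suml; apply: eq_bigr => u _.
  rewrite mulr_sumr mulr_suml; apply: eq_bigr => v _.
  by case: (X u == X t); case: (Y v == Y t); rewrite ?mul1r ?mul0r.
have le_pair u v : \sum_t ((X u == X t) && (Y v == Y t))%:R / (cJ t)%:R
    <= 1 - ((u == t1) && (v == t2))%:R :> R.
  have [-> | _] := eqVneq u t1; have [-> | _] := eqVneq v t2;
    rewrite /= ?subr0 ?sum_fiber_weight_le1 //.
  rewrite subrr big1 // => t _; have [/andP[/eqP Xt /eqP Yt] | _] := boolP (_ && _).
    by case: nex; exists t.
  by rewrite mul0r.
apply: le_trans (ler_sum _ (fun u _ => ler_sum _ (fun v _ => le_pair u v))) _.
rewrite le_eqVlt; apply/predU1l.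
under eq_bigr do rewrite sumrB.
have sum1 : \sum_(t : T) (1 : R) = #|T|%:R by rewrite sumr_const.
have sumN : \sum_(t : T) (#|T|%:R : R) = #|T|%:R ^+ 2.
  by rewrite sumr_const -(mulr_natr (#|T|%:R : R)) -expr2.
rewrite sumrB !sum1 sumN; congr (_ - _).
rewrite (bigD1 t1) //= (bigD1 t2) //= !eqxx big1 ?addr0; last first.
  by move=> v /negbTE ->; rewrite andbF.
by rewrite big1 ?addr0 // => u /negbTE ->; rewrite big1.
Qed.

Lemma mutinf0_support :
  mutinf R X Y = 0 -> forall t1 t2, exists u, X u = X t1 /\ Y u = Y t2.
Proof.
move=> I0 t1 t2; apply: contrapT => /sum_ratio_le le_sum.
have := mutinf_ge_ratio t1; rewrite I0.
set N2 := #|T|%:R ^+ 2; set S := \sum_t ratio t.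
have N2_gt0 : 0 < N2 by rewrite exprn_gt0 // ltr0n; apply/card_gt0P; exists t1.
have : N2^-1 * S <= N2^-1 * (N2 - 1) by rewrite ler_wpM2l // invr_ge0 ltW.
rewrite mulrBr mulr1 mulVf ?lt0r_neq0 //.
have : 0 < N2^-1 by rewrite invr_gt0.
set a := N2^-1 * S; set b := N2^-1; lra.
Qed.

End MutualInformation.

Section RateBound.

Variables (R : realType) (F : finFieldType) (V E : finType) (tl hd : E -> V).
Variables (rho : V) (l n : nat) (c : code F tl hd rho l n).

Local Notation D := (Dset tl hd).

(* Perfect secrecy of [W] lets every message vector concentrated at one source
   of [D W] be paired with keys producing the same messages on [W]; keys outside
   [D W] are irrelevant to [W] and can be fixed once and for all. *)
Lemma secret_family (W : {set E}) (s0 : srcT hd) :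
  mutinf R (YW W) (fun w : Omega c => w.1) = 0 -> D W (val s0) ->
  exists wa : 'rV[F]_l -> Omega c,
    [/\ forall a, \sum_(s : srcT hd) (wa a).1 s = a,
        forall a b, {in W, glob (wa a) =1 glob (wa b)}
      & forall a b (s : srcT hd), ~ D W (val s) ->
          (wa a).1 s = (wa b).1 s /\ (wa a).2 s = (wa b).2 s].
Proof.
move=> sec Ds0.
pose k0 : keyT c := finfun (fun s => xchoose (elimT card_gt0P (key_nonempty c s))).
pose w0 : Omega c := ([ffun _ => 0], k0).
pose msg a : msgT F hd l := [ffun s => if s == s0 then a else 0].
have ex_u a : exists u : Omega c, (YW W u == YW W w0) && (u.1 == msg a).
  have [u [Yu mu]] := mutinf0_support sec w0 (msg a, k0).
  by exists u; rewrite Yu mu !eqxx.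
pose u a := xchoose (ex_u a).
pose wa a : Omega c :=
  (msg a, finfun (fun s => if `[< D W (val s) >] then (u a).2 s else k0 s)).
have globW a : {in W, glob (wa a) =1 glob w0}.
  move=> e eW; have /andP[/eqP Yu /eqP mu] := xchooseP (ex_u a).
  rewrite (glob_upstream (w := wa a) (w' := u a)).
    by have := congr1 (fun y : {ffun E -> 'rV[F]_n} => y e) Yu; rewrite !ffunE eW.
  move=> s se; rewrite /wa /= -/(u a) mu !ffunE; split=> //.
  by rewrite asboolT //; split; [exact: valP | exists e].
exists wa; split.
- move=> a; rewrite /= (bigD1 s0) //= ffunE eqxx big1 ?addr0 // => s /negbTE ss0.
  by rewrite ffunE ss0.
- by move=> a b e eW; rewrite !globW.
move=> a b s nDs; rewrite /wa /= !ffunE (asboolF nDs).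
suff /negbTE -> : s != s0 by [].
by apply/eqP => ss0; apply: nDs; rewrite ss0.
Qed.

(* The messages on [C] determine the output of the decoder, because every path
   from [D W] to [rho] crosses [C] or [W], and the messages on [W] are fixed. *)
Lemma rate_le_cut (r : nat) (W C : {set E}) :
  network tl hd rho -> Wr' tl hd r W -> Cstar tl hd rho W C ->
  admissible R r c -> (l <= n * #|C|)%N.
Proof.
move=> net [Wr Wn _] [[_ sepC _] _] [dec_ok sec].
have [s0v Ds0] := Dset_nonempty (network_acyclic net) Wn.
pose s0 : srcT hd := exist _ s0v (proj1 Ds0).
have [wa [sum_wa globW wa_out]] := secret_family (s0 := s0) (sec W Wr) Ds0.
pose f a := [ffun e : {e | e \in C} => glob (wa a) (val e)].
have f_inj : injective f.
  move=> a b fab; rewrite -(sum_wa a) -(sum_wa b) -!dec_ok.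
  apply: dec_local => e erho.
  apply: (glob_eq_sep (network_acyclic net) (wa_out a b) _ (sep_residual sepC)).
    move=> e'; rewrite inE => /orP[e'C | e'W]; last exact: globW.
    by move/ffunP: fab => /(_ (exist _ e' e'C)); rewrite !ffunE.
  by rewrite inE.
have := leq_card f f_inj; rewrite card_ffun card_sig !card_mx !mul1n -expnM.
by rewrite leq_exp2l ?card_finNzRing_gt1.
Qed.

End RateBound.

Lemma achievable_le (R : realType) (F : finFieldType) (V E : finType)
    (tl hd : E -> V) (rho : V) (r k : nat) (x : R) :
  (forall l n (c : code F tl hd rho l n), (0 < n)%N -> admissible R r c -> (l <= n * k)%N) ->
  achievable F tl hd rho r x -> x <= k%:R.
Proof.
move=> rate_le ach; rewrite leNgt; apply/negP => lt_kx.
have kx_gt0 : 0 < x - k%:R by rewrite subr_gt0.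
have [l [n [c [n_gt0 adm lt_x]]]] := ach _ kx_gt0.
have le_k : l%:R / n%:R <= k%:R :> R.
  by rewrite ler_pdivrMr ?ltr0n // -natrM ler_nat mulnC (rate_le _ _ c).
set q := l%:R / n%:R in lt_x le_k; lra.
Qed.

Theorem theorem9 (R : realType) (F : finFieldType) (V E : finType)
  (tl hd : E -> V) (rho : V) (r : nat) :
  network tl hd rho -> (0 < r)%N ->
  (forall (W C : {set E}), Wr' tl hd r W -> Cstar tl hd rho W C ->
     forall x : R, achievable F tl hd rho r x -> x <= #|C|%:R) /\
  (exists v : nat,
     [/\ (exists W C, [/\ Wr' tl hd r W, Cstar tl hd rho W C & #|C| = v]),
         (forall W C, Wr' tl hd r W -> Cstar tl hd rho W C -> (v <= #|C|)%N),
         (exists W C, WCpair tl hd rho r W C /\ (#|C| - #|W|)%N = v)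
       & (forall W C, WCpair tl hd rho r W C -> (v <= #|C| - #|W|)%N)]).
Proof.
move=> net r_gt0; split; last exact: min_Cstar_eq_min_WCpair.
move=> W C WW CC x; apply: achievable_le => l n c _ adm.
exact: rate_le_cut net WW CC adm.
Qed.
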